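(* For $|q|<1$ and nonzero complex $x,y,u,v$, $$\begin{aligned}&4qxyuv[-q^2x^2,-q^2y^2,-q^2u^2,-q^2v^2;q^2]_\infty+4q^{1/2}xy[-q^2x^2,-q^2y^2,-qu^2,-qv^2;q^2]_\infty\\&\quad+4q^{1/2}uv[-qx^2,-qy^2,-q^2u^2,-q^2v^2;q^2]_\infty+4[-qx^2,-qy^2,-qu^2,-qv^2;q^2]_\infty\\&=\frac{(q^{1/2};q^{1/2})_\infty^4}{(q^2;q^2)_\infty^4}\Big([-q^{1/4}x,-q^{1/4}y,-q^{1/4}u,-q^{1/4}v;q^{1/2}]_\infty+[q^{1/4}x,q^{1/4}y,-q^{1/4}u,-q^{1/4}v;q^{1/2}]_\infty\\&\qquad+[-q^{1/4}x,-q^{1/4}y,q^{1/4}u,q^{1/4}v;q^{1/2}]_\infty+[q^{1/4}x,q^{1/4}y,q^{1/4}u,q^{1/4}v;q^{1/2}]_\infty\Big).\end{aligned}$$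
   Context: $(z;p)_\infty=\prod_{k\ge0}(1-zp^k)$, $[z;p]_\infty=(z;p)_\infty(p/z;p)_\infty$, and $[z_1,\dots,z_n;p]_\infty=\prod_j[z_j;p]_\infty$. Fractional powers of $q$ are fixed consistently (e.g. $q^{1/4}$ any fixed fourth root, $q^{1/2}=(q^{1/4})^2$). *)

From Stdlib Require Import Reals ClassicalEpsilon.
Open Scope R_scope.

Definition CC := (R * R)%type.
Definition RtoC (a : R) : CC := (a, 0).
Definition Cplus (z w : CC) : CC := (fst z + fst w, snd z + snd w).
Definition Copp (z : CC) : CC := (- fst z, - snd z).
Definition Cminus (z w : CC) : CC := Cplus z (Copp w).
Definition Cmult (z w : CC) : CC :=
  (fst z * fst w - snd z * snd w, fst z * snd w + snd z * fst w).
Definition Cinv (z : CC) : CC :=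
  let d := fst z ^ 2 + snd z ^ 2 in (fst z / d, - snd z / d).
Definition Cdiv (z w : CC) : CC := Cmult z (Cinv w).
Fixpoint Cpow (z : CC) (n : nat) : CC :=
  match n with O => RtoC 1 | S m => Cmult z (Cpow z m) end.
Definition Cnorm (z : CC) : R := sqrt (fst z ^ 2 + snd z ^ 2).

Declare Scope C_scope.
Delimit Scope C_scope with C.
Infix "+" := Cplus : C_scope.
Infix "-" := Cminus : C_scope.
Notation "- z" := (Copp z) : C_scope.
Infix "*" := Cmult : C_scope.
Infix "/" := Cdiv : C_scope.
Infix "^" := Cpow : C_scope.

Definition Ccv (u : nat -> CC) (l : CC) : Prop :=
  forall eps : R, eps > 0 -> exists N : nat, forall n : nat, (n >= N)%nat ->
    Cnorm (Cminus (u n) l) < eps.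

(* the limit of a sequence (a chosen limit; unique when it exists) *)
Definition Clim (u : nat -> CC) : CC :=
  epsilon (inhabits (RtoC 0)) (fun l => Ccv u l).

Fixpoint qpoch_part (z p : CC) (n : nat) : CC :=
  match n with
  | O => RtoC 1
  | S m => Cmult (qpoch_part z p m) (Cminus (RtoC 1) (Cmult z (Cpow p m)))
  end.

Definition qpoch (z p : CC) : CC := Clim (qpoch_part z p).

Definition theta (z p : CC) : CC := Cmult (qpoch z p) (qpoch (Cdiv p z) p).

Definition theta4 (z1 z2 z3 z4 p : CC) : CC :=
  Cmult (Cmult (Cmult (theta z1 p) (theta z2 p)) (theta z3 p)) (theta z4 p).

From Pilot Require Import Defs.
From Stdlib Require Import Reals Lra Lia ClassicalEpsilon Classical.
Require Coquelicot.Coquelicot.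
Open Scope R_scope.

(** Write θ(z;p) = [z;p]_∞ and L(p) = (p;p)_∞.  The proof rests on the Jacobi
  triple product  L(p) θ(z;p) = Σ_{m∈ℤ} (-1)^m p^{m(m-1)/2} z^m =: S(p,z),
  valid for 0 < |p| < 1 and z ≠ 0, which we prove from scratch:
  - the finite product (z;p)_N (p/z;p)_N is expanded with the q-binomial
    theorem into a sum of Gaussian binomials [2N, N+m] times the terms of S;
  - each Gaussian binomial tends to 1/L(p) and the terms are dominated by a
    geometric series, so a Tannery-type limit exchange yields the identity.
  Splitting S(p,z) by the parity of m gives the dissection
    S(p,z) = S(p⁴,-p z²) - z S(p⁴,-p³z²).
  With r = q^{1/4} and h = r² (so h⁴ = q²), put E = S(q²,-h(rx)²) and
  O = S(q²,-h³(rx)²).  Then θ(∓rx;h) = (E ± rx O)/L(h), while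
  θ(-q x²;q²) = E/L(q²) and θ(-q²x²;q²) = O/L(q²).  Substituting these for
  x, y, u, v reduces the theorem to a polynomial identity in the E's and
  O's; the case r = 0 (i.e. q = 0) is checked directly. *)

(** ** Complex numbers
  The operations of [Defs] coincide definitionally with Coquelicot's complex
  numbers, from which we import the field structure and the modulus facts. *)

Definition CC_field_theory :
  field_theory (RtoC 0) (RtoC 1) Cplus Cmult Cminus Copp Cdiv Cinv (@eq CC)
  := Coquelicot.Complex.C_field_theory.
Add Field CC_field : CC_field_theory.

Notation C0 := (RtoC 0).
Notation C1 := (RtoC 1).

Lemma C1_neq_0 : C1 <> C0.
Proof. exact Coquelicot.Complex.C1_nz. Qed.
Lemma Cnorm_mult a b : Cnorm (Cmult a b) = Cnorm a * Cnorm b.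
Proof. exact (Coquelicot.Complex.Cmod_mult a b). Qed.
Lemma Cnorm_triangle a b : Cnorm (Cplus a b) <= Cnorm a + Cnorm b.
Proof. exact (Coquelicot.Complex.Cmod_triangle a b). Qed.
Lemma Cnorm_opp a : Cnorm (Copp a) = Cnorm a.
Proof. exact (Coquelicot.Complex.Cmod_opp a). Qed.
Lemma Cnorm_ge0 a : 0 <= Cnorm a.
Proof. exact (Coquelicot.Complex.Cmod_ge_0 a). Qed.
Lemma Cnorm_eq0 a : Cnorm a = 0 -> a = C0.
Proof. exact (Coquelicot.Complex.Cmod_eq_0 a). Qed.
Lemma Cnorm_RtoC a : Cnorm (RtoC a) = Rabs a.
Proof. exact (Coquelicot.Complex.Cmod_R a). Qed.
Lemma Cnorm_inv a : a <> C0 -> Cnorm (Cinv a) = / Cnorm a.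
Proof. exact (Coquelicot.Complex.Cmod_inv a). Qed.
Lemma Cnorm_fst a : Rabs (fst a) <= Cnorm a.
Proof. exact (Coquelicot.Complex.re_le_Cmod a). Qed.
Lemma Cnorm_snd a : Rabs (snd a) <= Cnorm a.
Proof. eapply Rle_trans; [apply Rmax_r | apply (Coquelicot.Complex.Rmax_Cmod a)]. Qed.
Lemma Cnorm_le_parts a : Cnorm a <= Rabs (fst a) + Rabs (snd a).
Proof.
  destruct a as [a1 a2].
  assert (E : (a1, a2) = Cplus (RtoC a1) (Cmult (RtoC a2) (0, 1)))
    by (unfold Cplus, Cmult, RtoC; simpl; f_equal; ring).
  assert (Ei : Cnorm (0, 1) = 1).
  { unfold Cnorm; simpl. replace (0 * (0 * 1) + 1 * (1 * 1)) with 1 by ring. apply sqrt_1. }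
  rewrite E at 1. eapply Rle_trans; [apply Cnorm_triangle|].
  rewrite Cnorm_mult, !Cnorm_RtoC, Ei. simpl. lra.
Qed.

Lemma Cnorm_1 : Cnorm C1 = 1.
Proof. rewrite Cnorm_RtoC; apply Rabs_R1. Qed.
Lemma Cnorm_0 : Cnorm C0 = 0.
Proof. rewrite Cnorm_RtoC; apply Rabs_R0. Qed.
Lemma Cnorm_gt0 a : a <> C0 -> 0 < Cnorm a.
Proof.
  intro H. destruct (Cnorm_ge0 a) as [h|h]; auto.
  exfalso; apply H, Cnorm_eq0; auto.
Qed.
Lemma Cnorm_minus a b : Cnorm (Cminus a b) <= Cnorm a + Cnorm b.
Proof. unfold Cminus. rewrite <- (Cnorm_opp b). apply Cnorm_triangle. Qed.
Lemma Cnorm_minus_sym a b : Cnorm (Cminus a b) = Cnorm (Cminus b a).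
Proof. replace (Cminus a b) with (Copp (Cminus b a)) by ring. apply Cnorm_opp. Qed.
Lemma Cnorm_reverse a b : Cnorm a - Cnorm b <= Cnorm (Cminus a b).
Proof.
  pose proof (Cnorm_triangle (Cminus a b) b) as H.
  replace (Cplus (Cminus a b) b) with a in H by ring. lra.
Qed.

Open Scope C_scope.

Lemma Cpow_add z a b : z ^ (a + b) = z ^ a * z ^ b.
Proof. induction a; simpl. ring. rewrite IHa; ring. Qed.
Lemma Cpow_mul z a b : z ^ (a * b) = (z ^ a) ^ b.
Proof.
  induction b; simpl. rewrite Nat.mul_0_r; auto.
  rewrite Nat.mul_succ_r, Cpow_add, IHb. ring.
Qed.
Lemma Cpow_mult a b n : (a * b) ^ n = a ^ n * b ^ n.
Proof. induction n; simpl. ring. rewrite IHn; ring. Qed.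
Lemma Cpow_one n : C1 ^ n = C1.
Proof. induction n; simpl; auto. rewrite IHn; ring. Qed.
Lemma Cpow_inv z n : z <> C0 -> z ^ n * (Cinv z) ^ n = C1.
Proof.
  intro H. rewrite <- Cpow_mult. replace (z * Cinv z) with C1 by (field; auto).
  apply Cpow_one.
Qed.
Lemma Cnorm_pow z n : Cnorm (z ^ n) = (Cnorm z ^ n)%R.
Proof. induction n; simpl. apply Cnorm_1. rewrite Cnorm_mult, IHn; auto. Qed.
Lemma Cnorm_pow_lt1 p n : (Cnorm p < 1)%R -> (0 < n)%nat -> (Cnorm (p ^ n)%C < 1)%R.
Proof.
  intros H Hn. rewrite Cnorm_pow.
  apply pow_lt_1_compat; [split; [apply Cnorm_ge0|auto]|auto].
Qed.

Lemma Cmult_neq_0 a b : a <> C0 -> b <> C0 -> a * b <> C0.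
Proof.
  intros Ha Hb E. assert (H : Cnorm (a * b) = 0%R) by (rewrite E; apply Cnorm_0).
  rewrite Cnorm_mult in H. apply Cnorm_gt0 in Ha. apply Cnorm_gt0 in Hb. nra.
Qed.
Lemma Cpow_neq_0 z n : z <> C0 -> z ^ n <> C0.
Proof. intro H. induction n; simpl. apply C1_neq_0. apply Cmult_neq_0; auto. Qed.
Lemma Copp_neq_0 a : a <> C0 -> - a <> C0.
Proof. intros H E. apply H. replace a with (- - a) by ring. rewrite E. ring. Qed.

Ltac nonzero :=
  repeat split;
  repeat (first [apply Copp_neq_0 | apply Cpow_neq_0 | apply Cmult_neq_0]);
  auto using C1_neq_0.

(** ** Limits of complex sequences *)

Lemma Ccv_unique u l1 l2 : Ccv u l1 -> Ccv u l2 -> l1 = l2.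
Proof.
  intros H1 H2.
  cut (l1 - l2 = C0).
  { intro E. replace l1 with (l1 - l2 + l2) by ring. rewrite E; ring. }
  apply Cnorm_eq0. destruct (Cnorm_ge0 (l1 - l2)) as [h|h]; [|auto].
  set (e := (Cnorm (l1 - l2)%C / 2)%R).
  destruct (H1 e) as [N1 HN1]; [unfold e; lra|].
  destruct (H2 e) as [N2 HN2]; [unfold e; lra|].
  set (n := max N1 N2).
  specialize (HN1 n ltac:(lia)). specialize (HN2 n ltac:(lia)).
  pose proof (Cnorm_triangle (l1 - u n) (u n - l2)) as H.
  replace ((l1 - u n) + (u n - l2)) with (l1 - l2) in H by ring.
  rewrite (Cnorm_minus_sym l1 (u n)) in H. unfold e in *. lra.
Qed.

Lemma Clim_eq u l : Ccv u l -> Clim u = l.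
Proof.
  intro H. apply (Ccv_unique u); [|auto].
  apply (epsilon_spec (inhabits C0) (fun l => Ccv u l)). eauto.
Qed.

Lemma Ccv_const c : Ccv (fun _ => c) c.
Proof.
  intros e He. exists O. intros. replace (c - c) with C0 by ring.
  rewrite Cnorm_0; lra.
Qed.

Lemma Ccv_ext u v l :
  (exists N0, forall n, (n >= N0)%nat -> u n = v n) -> Ccv u l -> Ccv v l.
Proof.
  intros [N0 HE] Hu e He. destruct (Hu e He) as [N H]. exists (max N N0).
  intros n Hn. rewrite <- HE by lia. apply H; lia.
Qed.

Lemma Ccv_reindex u l (phi : nat -> nat) c :
  Ccv u l -> (forall n, (n <= phi n + c)%nat) -> Ccv (fun n => u (phi n)) l.
Proof.
  intros Hu Hphi e He. destruct (Hu e He) as [N H]. exists (N + c)%nat.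
  intros n Hn. apply H. specialize (Hphi n). lia.
Qed.

Lemma Ccv_plus u v l m : Ccv u l -> Ccv v m -> Ccv (fun n => u n + v n) (l + m).
Proof.
  intros Hu Hv e He.
  destruct (Hu (e/2)%R) as [N1 H1]; [lra|]. destruct (Hv (e/2)%R) as [N2 H2]; [lra|].
  exists (max N1 N2). intros n Hn.
  specialize (H1 n ltac:(lia)). specialize (H2 n ltac:(lia)).
  replace ((u n + v n) - (l + m)) with ((u n - l) + (v n - m)) by ring.
  eapply Rle_lt_trans; [apply Cnorm_triangle|]. lra.
Qed.

Lemma Ccv_scal c u l : Ccv u l -> Ccv (fun n => c * u n) (c * l).
Proof.
  intros Hu e He. pose proof (Cnorm_ge0 c) as Hc.
  destruct (Hu (e / (Cnorm c + 1))%R) as [N H]; [apply Rdiv_lt_0_compat; lra|].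
  exists N. intros n Hn. specialize (H n Hn).
  replace (c * u n - c * l) with (c * (u n - l)) by ring. rewrite Cnorm_mult.
  pose proof (Cnorm_ge0 (u n - l)) as Hd.
  apply Rmult_lt_compat_r with (r := (Cnorm c + 1)%R) in H; [|lra].
  unfold Rdiv in H. rewrite Rmult_assoc, Rinv_l in H by lra. nra.
Qed.

Lemma Ccv_minus u v l m : Ccv u l -> Ccv v m -> Ccv (fun n => u n - v n) (l - m).
Proof.
  intros Hu Hv. apply (Ccv_plus u (fun n => - v n)); [auto|].
  replace (- m) with (RtoC (-1) * m)
    by (unfold RtoC, Cmult, Copp; simpl; f_equal; ring).
  apply (Ccv_ext (fun n => RtoC (-1) * v n)).
  - exists O; intros; unfold RtoC, Cmult, Copp; simpl; f_equal; ring.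
  - apply Ccv_scal; auto.
Qed.

Lemma Ccv_mult u v l m : Ccv u l -> Ccv v m -> Ccv (fun n => u n * v n) (l * m).
Proof.
  intros Hu Hv e He. pose proof (Cnorm_ge0 l). pose proof (Cnorm_ge0 m).
  destruct (Hu 1%R) as [N1 H1]; [lra|].
  destruct (Hv (e / (2 * (Cnorm l + 1)))%R) as [N2 H2]; [apply Rdiv_lt_0_compat; lra|].
  destruct (Hu (e / (2 * (Cnorm m + 1)))%R) as [N3 H3]; [apply Rdiv_lt_0_compat; lra|].
  exists (max N1 (max N2 N3)). intros n Hn.
  specialize (H1 n ltac:(lia)). specialize (H2 n ltac:(lia)). specialize (H3 n ltac:(lia)).
  replace (u n * v n - l * m) with (u n * (v n - m) + m * (u n - l)) by ring.
  eapply Rle_lt_trans; [apply Cnorm_triangle|]. rewrite !Cnorm_mult.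
  assert (Hun : (Cnorm (u n) <= Cnorm l + 1)%R).
  { pose proof (Cnorm_reverse (u n) l) as R. lra. }
  assert (A : (Cnorm (u n) * Cnorm (v n - m)%C <= e/2)%R).
  { apply Rle_trans with ((Cnorm l + 1) * (e / (2 * (Cnorm l + 1))))%R.
    - apply Rmult_le_compat; try apply Cnorm_ge0; lra.
    - right; field; lra. }
  assert (B : (Cnorm m * Cnorm (u n - l)%C < e/2)%R).
  { apply Rle_lt_trans with (Cnorm m * (e / (2 * (Cnorm m + 1))))%R.
    - apply Rmult_le_compat_l; lra.
    - apply Rlt_le_trans with ((Cnorm m + 1) * (e / (2 * (Cnorm m + 1))))%R.
      + apply Rmult_lt_compat_r; [apply Rdiv_lt_0_compat|]; lra.
      + right; field; lra. }
  lra.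
Qed.

Lemma Ccv_inv u l : Ccv u l -> l <> C0 -> Ccv (fun n => Cinv (u n)) (Cinv l).
Proof.
  intros Hu Hl e He. pose proof (Cnorm_gt0 l Hl) as Hlp.
  destruct (Hu (Cnorm l / 2)%R) as [N1 H1]; [lra|].
  destruct (Hu (e * (Cnorm l * Cnorm l) / 2)%R) as [N2 H2].
  { apply Rdiv_lt_0_compat; [apply Rmult_lt_0_compat; nra|lra]. }
  exists (max N1 N2). intros n Hn.
  specialize (H1 n ltac:(lia)). specialize (H2 n ltac:(lia)).
  assert (Hun : (Cnorm l / 2 <= Cnorm (u n))%R).
  { pose proof (Cnorm_reverse l (u n)) as R. rewrite Cnorm_minus_sym in R. lra. }
  assert (Hu0 : u n <> C0). { intro E. rewrite E, Cnorm_0 in Hun. lra. }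
  replace (Cinv (u n) - Cinv l) with ((l - u n) * Cinv (u n) * Cinv l) by (field; auto).
  rewrite !Cnorm_mult, !Cnorm_inv, Cnorm_minus_sym by auto.
  apply Rle_lt_trans with (Cnorm (u n - l)%C * / (Cnorm l / 2) * / Cnorm l)%R.
  - apply Rmult_le_compat_r; [left; apply Rinv_0_lt_compat; lra|].
    apply Rmult_le_compat_l; [apply Cnorm_ge0|]. apply Rinv_le_contravar; lra.
  - apply Rlt_le_trans with ((e * (Cnorm l * Cnorm l) / 2) * / (Cnorm l / 2) * / Cnorm l)%R.
    + apply Rmult_lt_compat_r; [apply Rinv_0_lt_compat; lra|].
      apply Rmult_lt_compat_r; [apply Rinv_0_lt_compat; lra|auto].
    + right. field. lra.
Qed.

Lemma Ccv_norm_le u l B : Ccv u l -> (forall n, (Cnorm (u n) <= B)%R) -> (Cnorm l <= B)%R.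
Proof.
  intros Hu HB. apply Rnot_lt_le. intro Hl.
  destruct (Hu (Cnorm l - B)%R) as [N H]; [lra|]. specialize (H N (le_n _)).
  specialize (HB N). pose proof (Cnorm_reverse l (u N)). rewrite Cnorm_minus_sym in H. lra.
Qed.

Lemma Ccv_norm_ge u l B : Ccv u l -> (forall n, (B <= Cnorm (u n))%R) -> (B <= Cnorm l)%R.
Proof.
  intros Hu HB. apply Rnot_lt_le. intro Hl.
  destruct (Hu (B - Cnorm l)%R) as [N H]; [lra|]. specialize (H N (le_n _)).
  specialize (HB N). pose proof (Cnorm_reverse (u N) l). lra.
Qed.

Fixpoint sumC (n : nat) (f : nat -> CC) : CC :=
  match n with O => C0 | S k => sumC k f + f k end.
Fixpoint sumR (n : nat) (f : nat -> R) : R :=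
  match n with O => 0%R | S k => (sumR k f + f k)%R end.

Lemma sumC_ext n f g : (forall k, (k < n)%nat -> f k = g k) -> sumC n f = sumC n g.
Proof.
  induction n; intros H; simpl; auto.
  rewrite IHn by (intros; apply H; lia). rewrite H by lia; auto.
Qed.
Lemma sumC_plus n f g : sumC n (fun k => f k + g k) = sumC n f + sumC n g.
Proof. induction n; simpl. ring. rewrite IHn; ring. Qed.
Lemma sumC_minus n f g : sumC n (fun k => f k - g k) = sumC n f - sumC n g.
Proof. induction n; simpl. ring. rewrite IHn; ring. Qed.
Lemma sumC_scal n c f : sumC n (fun k => c * f k) = c * sumC n f.
Proof. induction n; simpl. ring. rewrite IHn; ring. Qed.
Lemma sumC_shift n f : sumC (S n) f = f O + sumC n (fun k => f (S k)).
Proof. induction n; simpl in *. ring. rewrite IHn; ring. Qed.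
Lemma sumC_add a b f : sumC (a + b) f = sumC a f + sumC b (fun k => f (a + k)%nat).
Proof.
  induction b; simpl. rewrite Nat.add_0_r; ring.
  rewrite Nat.add_succ_r; simpl. rewrite IHb; ring.
Qed.
Lemma sumC_rev n f : sumC n f = sumC n (fun k => f (n - S k)%nat).
Proof.
  induction n; auto. rewrite (sumC_shift n (fun k => f (S n - S k)%nat)).
  change (sumC (S n) f) with (sumC n f + f n). rewrite IHn.
  replace (S n - 1)%nat with n by lia.
  rewrite (sumC_ext n (fun k => f (n - S k)%nat) (fun k => f (S n - S (S k))%nat))
    by reflexivity.
  ring.
Qed.
Lemma sumC_pairs n f : sumC (2 * n) f = sumC n (fun k => f (2 * k)%nat + f (S (2 * k))).
Proof.
  induction n; auto. replace (2 * S n)%nat with (S (S (2 * n))) by lia.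
  cbn [sumC]. rewrite IHn. ring.
Qed.

Lemma sumC_norm n f (M : nat -> R) :
  (forall k, (k < n)%nat -> (Cnorm (f k) <= M k)%R) -> (Cnorm (sumC n f) <= sumR n M)%R.
Proof.
  induction n; intros H; simpl. rewrite Cnorm_0; lra.
  eapply Rle_trans; [apply Cnorm_triangle|].
  pose proof (H n ltac:(lia)). pose proof (IHn ltac:(intros; apply H; lia)). lra.
Qed.

Lemma sumR_geom n c r a : (0 <= c)%R -> (0 <= r < 1)%R ->
  (sumR n (fun k => c * r ^ (a + k)) <= c * r ^ a / (1 - r))%R.
Proof.
  intros Hc Hr.
  assert (E : forall m,
    (sumR m (fun k => c * r ^ (a + k)) = c * r ^ a * (1 - r ^ m) / (1 - r))%R).
  { induction m; simpl. field; lra. rewrite IHm, pow_add. field. lra. }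
  rewrite E. apply Rmult_le_compat_r; [left; apply Rinv_0_lt_compat; lra|].
  pose proof (pow_le r a (proj1 Hr)). pose proof (pow_le r n (proj1 Hr)).
  assert (0 <= c * r ^ a)%R by (apply Rmult_le_pos; lra). nra.
Qed.

Lemma geometric_tail (f : nat -> CC) A K n : (0 <= A)%R ->
  (forall m, (Cnorm (f m) <= A * (1/2) ^ m)%R) ->
  (Cnorm (sumC n (fun i => f (K + i)%nat)) <= 2 * A * (1/2) ^ K)%R.
Proof.
  intros HA Hf. eapply Rle_trans.
  - apply sumC_norm with (M := fun i => (A * (1/2) ^ (K + i))%R). intros; apply Hf.
  - eapply Rle_trans; [apply sumR_geom; lra|]. right; field.
Qed.

Lemma telescope u n k : u (n + k)%nat - u n = sumC k (fun i => u (S (n + i)) - u (n + i)%nat).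
Proof.
  induction k; simpl. rewrite Nat.add_0_r; ring.
  rewrite <- IHk, Nat.add_succ_r. ring.
Qed.

Lemma Ccv_sumC K (f : nat -> nat -> CC) g : (forall m, Ccv (fun N => f N m) (g m)) ->
  Ccv (fun N => sumC K (f N)) (sumC K g).
Proof. intro H. induction K; simpl. apply Ccv_const. apply Ccv_plus; auto. Qed.

Lemma pow_small r e : (0 <= r < 1)%R -> (0 < e)%R ->
  exists N, forall n, (n >= N)%nat -> (r ^ n < e)%R.
Proof.
  intros Hr He.
  destruct (pow_lt_1_zero r ltac:(rewrite Rabs_pos_eq; lra) e He) as [N HN].
  exists N. intros n Hn. specialize (HN n Hn).
  rewrite Rabs_pos_eq in HN; auto. apply pow_le; lra.
Qed.

(* Complex Cauchy sequences converge: both coordinates are real Cauchy sequences. *)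
Lemma Cauchy_Ccv u :
  (forall e, (0 < e)%R -> exists N, forall m n, (m >= N)%nat -> (n >= N)%nat ->
     (Cnorm (u m - u n)%C < e)%R) ->
  exists l, Ccv u l.
Proof.
  intro Hu.
  assert (Hfst : Cauchy_crit (fun n => fst (u n))).
  { intros e He. destruct (Hu e He) as [N HN]. exists N. intros m n Hm Hn. unfold R_dist.
    eapply Rle_lt_trans; [|apply (HN m n Hm Hn)].
    eapply Rle_trans; [|apply Cnorm_fst]. simpl. right; f_equal; ring. }
  assert (Hsnd : Cauchy_crit (fun n => snd (u n))).
  { intros e He. destruct (Hu e He) as [N HN]. exists N. intros m n Hm Hn. unfold R_dist.
    eapply Rle_lt_trans; [|apply (HN m n Hm Hn)].
    eapply Rle_trans; [|apply Cnorm_snd]. simpl. right; f_equal; ring. }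
  destruct (Rcomplete.R_complete _ Hfst) as [l1 H1].
  destruct (Rcomplete.R_complete _ Hsnd) as [l2 H2].
  exists (l1, l2). intros e He.
  destruct (H1 (e/2)%R) as [N1 HN1]; [lra|]. destruct (H2 (e/2)%R) as [N2 HN2]; [lra|].
  exists (max N1 N2). intros n Hn.
  specialize (HN1 n ltac:(lia)). specialize (HN2 n ltac:(lia)). unfold R_dist in *.
  eapply Rle_lt_trans; [apply Cnorm_le_parts|]. simpl. unfold Rminus in *. lra.
Qed.

Lemma geometric_Ccv u c r : (0 <= c)%R -> (0 <= r < 1)%R ->
  (forall n, (Cnorm (u (S n) - u n)%C <= c * r ^ n)%R) -> exists l, Ccv u l.
Proof.
  intros Hc Hr Hu. apply Cauchy_Ccv.
  assert (Hdrift : forall n k, (Cnorm (u (n + k)%nat - u n)%C <= c * r ^ n / (1 - r))%R).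
  { intros n k. rewrite telescope. eapply Rle_trans.
    - apply sumC_norm with (M := fun i => (c * r ^ (n + i))%R). intros; auto.
    - apply sumR_geom; auto. }
  intros e He.
  destruct (pow_small r (e * (1 - r) / (2 * (c + 1))) Hr) as [N HN].
  { apply Rdiv_lt_0_compat; [apply Rmult_lt_0_compat|]; lra. }
  assert (Hsmall : (c * r ^ N / (1 - r) < e / 2)%R).
  { specialize (HN N (le_n _)). pose proof (pow_le r N (proj1 Hr)).
    apply Rmult_lt_compat_l with (r := (2 * (c + 1))%R) in HN; [|lra].
    replace (2 * (c + 1) * (e * (1 - r) / (2 * (c + 1))))%R with (e * (1 - r))%R in HN
      by (field; lra).
    apply Rmult_lt_reg_r with (r := (1 - r)%R); [lra|].
    replace (c * r ^ N / (1 - r) * (1 - r))%R with (c * r ^ N)%R by (field; lra). nra. }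
  exists N. intros m n Hm Hn.
  pose proof (Hdrift N (m - N)%nat) as Dm. pose proof (Hdrift N (n - N)%nat) as Dn.
  replace (N + (m - N))%nat with m in Dm by lia. replace (N + (n - N))%nat with n in Dn by lia.
  replace (u m - u n) with ((u m - u N) - (u n - u N)) by ring.
  eapply Rle_lt_trans; [apply Cnorm_minus|]. lra.
Qed.

(** ** Infinite products (z;p)_∞ *)

Lemma pow_le1 x n : (0 <= x <= 1)%R -> (x ^ n <= 1)%R.
Proof. intro H. rewrite <- (pow1 n). apply pow_incr; lra. Qed.

Lemma exp_le a b : (a <= b)%R -> (exp a <= exp b)%R.
Proof. intros [H|H]; [left; apply exp_increasing; auto | subst; lra]. Qed.

Lemma one_minus_ge_exp a W : (0 <= a <= W)%R -> (W < 1)%R -> (exp (- (a / (1 - W))) <= 1 - a)%R.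
Proof.
  intros Ha HW. apply Rle_trans with (exp (- (a / (1 - a)))).
  { apply exp_le, Ropp_le_contravar. unfold Rdiv.
    apply Rmult_le_compat_l; [lra|]. apply Rinv_le_contravar; lra. }
  rewrite exp_Ropp. apply Rle_trans with (/ (1 + a / (1 - a)))%R; [|right; field; lra].
  apply Rinv_le_contravar; [|apply exp_ineq1_le].
  apply Rplus_lt_le_0_compat; [lra|].
  unfold Rdiv; apply Rmult_le_pos; [lra|left; apply Rinv_0_lt_compat; lra].
Qed.

(* |(w;p)_n| <= exp(|w|(1-|p|^n)/(1-|p|)), from |1 - a| <= 1 + |a| <= exp|a|. *)
Lemma part_upper_n w p n : (Cnorm p < 1)%R ->
  (Cnorm (qpoch_part w p n) <= exp (Cnorm w * (1 - Cnorm p ^ n) / (1 - Cnorm p)))%R.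
Proof.
  intro Hp. pose proof (Cnorm_ge0 p). pose proof (Cnorm_ge0 w).
  induction n; simpl qpoch_part.
  - rewrite Cnorm_1.
    replace (Cnorm w * (1 - Cnorm p ^ 0) / (1 - Cnorm p))%R with 0%R by (simpl; field; lra).
    rewrite exp_0; lra.
  - rewrite Cnorm_mult.
    replace (Cnorm w * (1 - Cnorm p ^ S n) / (1 - Cnorm p))%R with
      (Cnorm w * (1 - Cnorm p ^ n) / (1 - Cnorm p) + Cnorm w * Cnorm p ^ n)%R
      by (simpl; field; lra).
    rewrite exp_plus. apply Rmult_le_compat; try apply Cnorm_ge0; auto.
    eapply Rle_trans; [apply Cnorm_minus|]. rewrite Cnorm_1, Cnorm_mult, Cnorm_pow.
    apply exp_ineq1_le.
Qed.

Lemma part_upper w p n : (Cnorm p < 1)%R ->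
  (Cnorm (qpoch_part w p n) <= exp (Cnorm w / (1 - Cnorm p)))%R.
Proof.
  intro Hp. eapply Rle_trans; [apply part_upper_n; auto|]. apply exp_le.
  pose proof (Cnorm_ge0 p). pose proof (Cnorm_ge0 w). pose proof (pow_le (Cnorm p) n H).
  unfold Rdiv. apply Rmult_le_compat_r; [left; apply Rinv_0_lt_compat; lra|]. nra.
Qed.

Lemma part_lower_n w p n : (Cnorm p < 1)%R -> (Cnorm w < 1)%R ->
  (exp (- (Cnorm w * (1 - Cnorm p ^ n) / ((1 - Cnorm w) * (1 - Cnorm p))))
     <= Cnorm (qpoch_part w p n))%R.
Proof.
  intros Hp Hw. pose proof (Cnorm_ge0 p). pose proof (Cnorm_ge0 w).
  induction n; simpl qpoch_part.
  - rewrite Cnorm_1.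
    replace (Cnorm w * (1 - Cnorm p ^ 0) / ((1 - Cnorm w) * (1 - Cnorm p)))%R with 0%R
      by (simpl; field; lra).
    rewrite Ropp_0, exp_0; lra.
  - rewrite Cnorm_mult.
    replace (- (Cnorm w * (1 - Cnorm p ^ S n) / ((1 - Cnorm w) * (1 - Cnorm p))))%R with
      (- (Cnorm w * (1 - Cnorm p ^ n) / ((1 - Cnorm w) * (1 - Cnorm p)))
       + - (Cnorm w * Cnorm p ^ n / (1 - Cnorm w)))%R
      by (simpl; field; lra).
    rewrite exp_plus. apply Rmult_le_compat; try (left; apply exp_pos); auto.
    pose proof (pow_le (Cnorm p) n H).
    assert (Cnorm p ^ n <= 1)%R by (apply pow_le1; lra).
    eapply Rle_trans; [apply one_minus_ge_exp with (W := Cnorm w); [split; nra | auto]|].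
    pose proof (Cnorm_reverse C1 (w * p ^ n)) as Hrev.
    rewrite Cnorm_1, Cnorm_mult, Cnorm_pow in Hrev. lra.
Qed.

Lemma part_lower w p n : (Cnorm p < 1)%R -> (Cnorm w < 1)%R ->
  (exp (- (Cnorm w / ((1 - Cnorm w) * (1 - Cnorm p)))) <= Cnorm (qpoch_part w p n))%R.
Proof.
  intros Hp Hw. eapply Rle_trans; [|apply part_lower_n; auto].
  apply exp_le, Ropp_le_contravar.
  pose proof (Cnorm_ge0 p). pose proof (Cnorm_ge0 w). pose proof (pow_le (Cnorm p) n H).
  unfold Rdiv. apply Rmult_le_compat_r; [|nra].
  left; apply Rinv_0_lt_compat, Rmult_lt_0_compat; lra.
Qed.

(* The partial products converge: their increments are O(|p|^n). *)
Lemma qpoch_spec w p : (Cnorm p < 1)%R -> Ccv (qpoch_part w p) (qpoch w p).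
Proof.
  intro Hp. pose proof (Cnorm_ge0 p). pose proof (Cnorm_ge0 w).
  destruct (geometric_Ccv (qpoch_part w p) (exp (Cnorm w / (1 - Cnorm p)) * Cnorm w)%R
              (Cnorm p)) as [l Hl].
  - apply Rmult_le_pos; auto. left; apply exp_pos.
  - lra.
  - intro n. simpl qpoch_part.
    replace (qpoch_part w p n * (C1 - w * p ^ n) - qpoch_part w p n)
      with (- (qpoch_part w p n * w * p ^ n)) by ring.
    rewrite Cnorm_opp, !Cnorm_mult, Cnorm_pow.
    apply Rmult_le_compat_r; [apply pow_le; auto|].
    apply Rmult_le_compat_r; auto. apply part_upper; auto.
  - unfold qpoch. rewrite (Clim_eq _ l Hl). auto.
Qed.

Lemma part_neq_0 w p n : (Cnorm p < 1)%R -> (Cnorm w < 1)%R -> qpoch_part w p n <> C0.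
Proof.
  intros Hp Hw E. pose proof (part_lower w p n Hp Hw) as H. rewrite E, Cnorm_0 in H.
  pose proof (exp_pos (- (Cnorm w / ((1 - Cnorm w) * (1 - Cnorm p))))). lra.
Qed.

Lemma qpoch_neq_0 w p : (Cnorm p < 1)%R -> (Cnorm w < 1)%R -> qpoch w p <> C0.
Proof.
  intros Hp Hw E.
  pose proof (Ccv_norm_ge _ _ _ (qpoch_spec w p Hp) (fun n => part_lower w p n Hp Hw)) as H.
  rewrite E, Cnorm_0 in H. pose proof (exp_pos (- (Cnorm w / ((1 - Cnorm w) * (1 - Cnorm p))))).
  lra.
Qed.

Lemma part_split w p a b : qpoch_part w p (a + b) = qpoch_part w p a * qpoch_part (w * p ^ a) p b.
Proof.
  induction b; simpl. rewrite Nat.add_0_r; ring.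
  rewrite Nat.add_succ_r. simpl. rewrite IHb, Cpow_add. ring.
Qed.

Lemma part_succ w p n : qpoch_part w p (S n) = (C1 - w) * qpoch_part (w * p) p n.
Proof.
  change (S n) with (1 + n)%nat. rewrite part_split. simpl.
  replace (w * (p * C1)) with (w * p) by ring. ring.
Qed.

Lemma qpoch_at_0 z : qpoch z C0 = C1 - z.
Proof.
  apply Clim_eq. apply (Ccv_ext (fun _ => C1 - z)); [|apply Ccv_const].
  exists 1%nat. intros n Hn. destruct n; [lia|]. clear Hn.
  induction n; simpl. ring.
  simpl in IHn. rewrite <- IHn. ring.
Qed.

(** ** Gaussian binomials and the finite triple product *)

Notation m1 := (- C1).

(* tri n = n(n-1)/2 *)
Fixpoint tri (n : nat) : nat := match n with O => O | S k => (tri k + k)%nat end.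

Lemma tri_add a b : tri (a + b) = (tri a + tri b + a * b)%nat.
Proof.
  induction b; simpl. rewrite Nat.add_0_r; nia.
  rewrite Nat.add_succ_r. simpl. rewrite IHb. nia.
Qed.
Lemma tri_double n : (2 * tri n + n = n * n)%nat.
Proof. induction n; simpl; nia. Qed.

(* The coefficient (-1)^m p^{m(m-1)/2} of z^m in the theta series. *)
Definition tcoef (p : CC) (m : nat) : CC := m1 ^ m * p ^ (tri m).

Lemma tcoef_S p j : tcoef p (S j) = m1 * p ^ j * tcoef p j.
Proof. unfold tcoef. simpl. rewrite Cpow_add. ring. Qed.

Fixpoint qbin (p : CC) (n j : nat) : CC :=
  match n with
  | O => match j with O => C1 | S _ => C0 end
  | S n' => match j with
            | O => C1
            | S j' => qbin p n' (S j') + p ^ (n' - j') * qbin p n' j'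
            end
  end.

Lemma qbin_above p n j : (n < j)%nat -> qbin p n j = C0.
Proof.
  revert j. induction n; intros j H; destruct j; simpl; try lia; auto.
  rewrite !IHn by lia. ring.
Qed.

Lemma qbin_diag p n : qbin p n n = C1.
Proof.
  induction n; auto. simpl. rewrite qbin_above, IHn, Nat.sub_diag by lia. simpl. ring.
Qed.

Lemma q_binomial w p n : qpoch_part w p n = sumC (S n) (fun j => qbin p n j * tcoef p j * w ^ j).
Proof.
  induction n.
  - simpl. unfold tcoef; simpl. ring.
  - change (qpoch_part w p (S n)) with (qpoch_part w p n * (C1 - w * p ^ n)). rewrite IHn.
    rewrite (sumC_shift (S n) (fun j => qbin p (S n) j * tcoef p j * w ^ j)).
    assert (Pascal : sumC (S n) (fun k => qbin p (S n) (S k) * tcoef p (S k) * w ^ (S k)) =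
      sumC (S n) (fun k => qbin p n (S k) * tcoef p (S k) * w ^ (S k)) +
      - (w * p ^ n) * sumC (S n) (fun k => qbin p n k * tcoef p k * w ^ k)).
    { rewrite <- sumC_scal, <- sumC_plus. apply sumC_ext. intros k Hk.
      simpl qbin. rewrite tcoef_S.
      replace (p ^ n) with (p ^ (n - k) * p ^ k) by (rewrite <- Cpow_add; f_equal; lia).
      simpl. ring. }
    assert (Head : sumC (S n) (fun j => qbin p n j * tcoef p j * w ^ j) =
       C1 + sumC (S n) (fun k => qbin p n (S k) * tcoef p (S k) * w ^ (S k))).
    { rewrite sumC_shift. change (sumC (S n) ?f) with (sumC n f + f n). cbv beta.
      rewrite (qbin_above p n (S n)) by lia.
      replace (qbin p n 0) with C1 by (destruct n; auto). unfold tcoef; simpl. ring. }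
    rewrite Pascal, Head. unfold tcoef; simpl. ring.
Qed.

Notation qfac p k := (qpoch_part p p k).

Lemma qbin_closed p n j : (j <= n)%nat -> qbin p n j * qfac p j * qfac p (n - j) = qfac p n.
Proof.
  revert j. induction n; intros j Hj.
  - destruct j; [|lia]. simpl. ring.
  - destruct j as [|j]; [simpl; ring|].
    destruct (Nat.eq_dec j n) as [->|Hne].
    { rewrite qbin_diag, Nat.sub_diag. simpl. ring. }
    destruct (Nat.le_exists_sub (S j) n ltac:(lia)) as [k [-> _]].
    pose proof (IHn (S j) ltac:(lia)) as H1. pose proof (IHn j ltac:(lia)) as H2.
    replace (k + S j - S j)%nat with k in H1 by lia.
    replace (k + S j - j)%nat with (S k) in H2 by lia.
    replace (S (k + S j) - S j)%nat with (S k) by lia.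
    simpl qbin. replace (k + S j - j)%nat with (S k) by lia.
    change (qfac p (S (k + S j))) with (qfac p (k + S j) * (C1 - p * p ^ (k + S j))).
    transitivity ((qbin p (k + S j) (S j) * qfac p (S j) * qfac p k) * (C1 - p * p ^ k)
       + p ^ (S k) * (qbin p (k + S j) j * qfac p j * qfac p (S k)) * (C1 - p * p ^ j)).
    { change (qfac p (S k)) with (qfac p k * (C1 - p * p ^ k)).
      change (qfac p (S j)) with (qfac p j * (C1 - p * p ^ j)). ring. }
    rewrite H1, H2.
    replace (p * p ^ (k + S j)) with (p ^ (S k) * (p * p ^ j)) by (rewrite Cpow_add; simpl; ring).
    simpl. ring.
Qed.

Lemma pow_exchange p s A B C D : p * s = C1 -> (A + D = B + C)%nat ->
  p ^ A * s ^ B = p ^ C * s ^ D.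
Proof.
  intros Hps HA. assert (Hu : forall n, p ^ n * s ^ n = C1).
  { intro n. rewrite <- Cpow_mult, Hps. apply Cpow_one. }
  transitivity (p ^ A * s ^ B * (p ^ D * s ^ D)); [rewrite Hu; ring|].
  transitivity (p ^ (A + D) * s ^ (B + D)); [rewrite !Cpow_add; ring|].
  rewrite HA, !Cpow_add.
  transitivity (p ^ C * s ^ D * (p ^ B * s ^ B)); [ring|]. rewrite Hu; ring.
Qed.

Lemma part_reflect p z N : p <> C0 -> z <> C0 ->
  qpoch_part (z * Cinv p ^ N) p N = (- z) ^ N * Cinv p ^ (tri (S N)) * qpoch_part (p / z) p N.
Proof.
  intros Hp Hz. set (s := Cinv p). assert (Hsp : s * p = C1) by (unfold s; field; auto).
  induction N; [simpl; ring|].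
  rewrite part_succ.
  replace (z * s ^ S N * p) with (z * s ^ N)
    by (simpl; transitivity (z * s ^ N * (s * p)); [rewrite Hsp|]; ring).
  rewrite IHN.
  change (qpoch_part (p / z) p (S N)) with (qpoch_part (p / z) p N * (C1 - p / z * p ^ N)).
  change (tri (S (S N))) with (tri (S N) + S N)%nat. rewrite Cpow_add.
  change ((- z) ^ S N) with (- z * (- z) ^ N).
  set (X := s ^ S N).
  assert (HX : X * (p * p ^ N) = C1).
  { unfold X. change (p * p ^ N) with (p ^ S N). rewrite <- Cpow_mult, Hsp. apply Cpow_one. }
  replace (C1 - z * X) with (- z * X * (C1 - p / z * p ^ N)); [ring|].
  transitivity (- z * X + X * (p * p ^ N)); [field; auto|]. rewrite HX; ring.
Qed.

(* With s = 1/p and K = (-z)^N s^{N(N+1)/2}, the term of index N + m in the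
   expansion of (z s^N; p)_{2N} is K times the m-th term of the theta series in z ... *)
Lemma reindex_upper p s z Q N m : p * s = C1 ->
  Q * tcoef p (N + m) * (z * s ^ N) ^ (N + m)
  = ((- z) ^ N * s ^ (tri (S N))) * (Q * tcoef p m * z ^ m).
Proof.
  intro Hps.
  transitivity (Q * m1 ^ N * m1 ^ m * p ^ (tri m) * z ^ N * z ^ m
                * (p ^ (tri N + N * m) * s ^ (N * (N + m)))).
  { unfold tcoef. rewrite tri_add, Cpow_mult, <- Cpow_mul, !Cpow_add. ring. }
  rewrite (pow_exchange p s (tri N + N * m) (N * (N + m)) 0 (tri N + N))
    by (auto; pose proof (tri_double N); nia).
  change (tri (S N)) with (tri N + N)%nat.
  replace (- z) with (m1 * z) by ring. rewrite Cpow_mult. unfold tcoef. simpl (p ^ 0). ring.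
Qed.

(* ... and the term of index N - (m+1) is K times the (m+1)-st term of the
   theta series in p/z. *)
Lemma reindex_lower p s z Q N m : p * s = C1 -> z <> C0 -> (m < N)%nat ->
  Q * tcoef p (N - S m) * (z * s ^ N) ^ (N - S m)
  = ((- z) ^ N * s ^ (tri (S N))) * (Q * tcoef p (S m) * (p / z) ^ (S m)).
Proof.
  intros Hps Hz Hm. remember (N - S m)%nat as k.
  replace N with (S m + k)%nat by lia. clear N Heqk Hm.
  transitivity (Q * m1 ^ k * z ^ k * (p ^ (tri k) * s ^ ((S m + k) * k))).
  { unfold tcoef. rewrite Cpow_mult, <- Cpow_mul. ring. }
  rewrite (pow_exchange p s (tri k) ((S m + k) * k) (tri (S m) + S m) (tri (S m + k) + (S m + k)))
    by (auto; rewrite tri_add; pose proof (tri_double k); nia).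
  change (tri (S (S m + k))) with (tri (S m + k) + (S m + k))%nat.
  assert (Ha : m1 ^ S m * m1 ^ S m = C1).
  { rewrite <- Cpow_mult. replace (m1 * m1) with C1 by ring. apply Cpow_one. }
  assert (Hb : z ^ S m * Cinv z ^ S m = C1) by (apply Cpow_inv; auto).
  unfold Cdiv. replace (- z) with (m1 * z) by ring. rewrite !Cpow_mult. unfold tcoef.
  rewrite (Cpow_add m1 (S m) k), (Cpow_add z (S m) k), (Cpow_add p (tri (S m)) (S m)).
  set (S1 := s ^ (tri (S m + k) + (S m + k))).
  transitivity ((m1 ^ S m * m1 ^ S m) * (z ^ S m * Cinv z ^ S m)
    * (Q * m1 ^ k * z ^ k * (p ^ tri (S m) * p ^ S m * S1))); [rewrite Ha, Hb|]; ring.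
Qed.

(* Finite Jacobi triple product: expand (z p^{-N}; p)_{2N} with the q-binomial
   theorem and split it as (z p^{-N};p)_N (z;p)_N = K (p/z;p)_N (z;p)_N. *)
Lemma finite_triple_product p z N : p <> C0 -> z <> C0 ->
  qpoch_part z p N * qpoch_part (p / z) p N =
  sumC (S N) (fun m => qbin p (N + N) (N + m) * tcoef p m * z ^ m) +
  sumC N (fun m => qbin p (N + N) (N - S m) * tcoef p (S m) * (p / z) ^ (S m)).
Proof.
  intros Hp Hz. set (s := Cinv p).
  assert (Hps : p * s = C1) by (unfold s; field; auto).
  set (K := (- z) ^ N * s ^ (tri (S N))).
  assert (HK : K <> C0).
  { apply Cmult_neq_0; apply Cpow_neq_0; [apply Copp_neq_0; auto|].
    intro E. rewrite E in Hps. apply C1_neq_0. rewrite <- Hps. ring. }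
  pose proof (q_binomial (z * s ^ N) p (N + N)) as H0.
  rewrite part_split in H0.
  replace (z * s ^ N * p ^ N) with z in H0
    by (transitivity (z * (p ^ N * s ^ N)); [rewrite <- Cpow_mult, Hps, Cpow_one|]; ring).
  unfold s in H0. rewrite part_reflect in H0 by auto. fold s K in H0.
  replace (S (N + N)) with (N + S N)%nat in H0 by lia.
  rewrite sumC_add, sumC_rev in H0.
  rewrite (sumC_ext N _ (fun m => K * (qbin p (N + N) (N - S m) * tcoef p (S m) * (p / z) ^ (S m))))
    in H0 by (intros m Hm; apply reindex_lower; auto).
  rewrite (sumC_ext (S N) _ (fun m => K * (qbin p (N + N) (N + m) * tcoef p m * z ^ m))) in H0
    by (intros m Hm; apply reindex_upper; auto).
  rewrite !sumC_scal in H0.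
  apply (f_equal (fun t => Cinv K * t)) in H0.
  transitivity (Cinv K * (K * qpoch_part (p / z) p N * qpoch_part z p N)); [field; auto|].
  rewrite H0. field; auto.
Qed.

(** ** The half theta series and its dissection *)

Definition half_partial (p w : CC) (n : nat) : CC := sumC n (fun m => tcoef p m * w ^ m).
Definition half_theta (p w : CC) : CC := Clim (half_partial p w).

Lemma Cnorm_tcoef p m : Cnorm (tcoef p m) = (Cnorm p ^ tri m)%R.
Proof.
  unfold tcoef. rewrite Cnorm_mult, !Cnorm_pow, Cnorm_opp, Cnorm_1, pow1. ring.
Qed.

(* The weights t^{m(m-1)/2} W^m 2^m (0 <= t < 1) are bounded: once 2 t^m W <= 1
   they decrease, and before that they are at most (2 max(1,W))^m. *)
Lemma gauss_weight_bounded t W : (0 <= t < 1)%R -> (0 <= W)%R ->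
  exists A, (0 <= A)%R /\ forall m, (t ^ tri m * W ^ m * 2 ^ m <= A)%R.
Proof.
  intros Ht HW. set (W' := Rmax 1 W).
  assert (HW1 : (1 <= W')%R) by apply Rmax_l. assert (HW2 : (W <= W')%R) by apply Rmax_r.
  set (b := fun m => (t ^ tri m * W ^ m * 2 ^ m)%R).
  assert (HbS : forall m, b (S m) = (b m * (2 * t ^ m * W))%R).
  { intro m. unfold b. simpl tri. rewrite pow_add. simpl. ring. }
  assert (Hb0 : forall m, (0 <= b m)%R).
  { intro m. unfold b. apply Rmult_le_pos; [apply Rmult_le_pos|]; apply pow_le; lra. }
  assert (Hratio : forall m, (0 <= 2 * t ^ m * W)%R).
  { intro m. pose proof (pow_le t m (proj1 Ht)). apply Rmult_le_pos; lra. }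
  destruct (pow_small t (/ (2 * (W + 1)))%R Ht) as [K HK]; [apply Rinv_0_lt_compat; lra|].
  assert (Hfin : forall m, (b m <= (2 * W') ^ m)%R).
  { induction m; [unfold b; simpl; lra|]. rewrite HbS. simpl.
    assert (t ^ m <= 1)%R by (apply pow_le1; lra). pose proof (Hratio m).
    apply Rle_trans with ((2 * W') ^ m * (2 * t ^ m * W))%R.
    - apply Rmult_le_compat_r; auto.
    - rewrite Rmult_comm. apply Rmult_le_compat_r; [apply pow_le; lra|nra]. }
  assert (Hdecr : forall j, (b (K + j)%nat <= b K)%R).
  { induction j; [rewrite Nat.add_0_r; lra|]. rewrite Nat.add_succ_r, HbS.
    assert (Hr : (2 * t ^ (K + j) * W <= 1)%R).
    { specialize (HK (K + j)%nat ltac:(lia)). pose proof (pow_le t (K + j) (proj1 Ht)).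
      apply Rmult_lt_compat_l with (r := (2 * (W + 1))%R) in HK; [|lra].
      rewrite Rinv_r in HK by lra. nra. }
    pose proof (Hb0 (K + j)%nat). pose proof (Hratio (K + j)%nat). nra. }
  exists ((2 * W') ^ K)%R. split; [apply pow_le; lra|]. intro m. fold (b m).
  destruct (Nat.le_gt_cases m K).
  - eapply Rle_trans; [apply Hfin|]. apply Rle_pow; [lra|lia].
  - replace m with (K + (m - K))%nat by lia.
    eapply Rle_trans; [apply Hdecr|]. apply Hfin.
Qed.

Lemma tcoef_decay p w : (Cnorm p < 1)%R -> exists A, (0 <= A)%R /\
  forall m, (Cnorm (tcoef p m * w ^ m)%C <= A * (1/2) ^ m)%R.
Proof.
  intro Hp.
  destruct (gauss_weight_bounded (Cnorm p) (Cnorm w)) as [A [HA Hb]];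
    [split; [apply Cnorm_ge0|auto] | apply Cnorm_ge0 |].
  exists A. split; auto. intro m. rewrite Cnorm_mult, Cnorm_tcoef, Cnorm_pow.
  replace (Cnorm p ^ tri m * Cnorm w ^ m)%R
    with (Cnorm p ^ tri m * Cnorm w ^ m * 2 ^ m * (1/2) ^ m)%R.
  - apply Rmult_le_compat_r; [apply pow_le; lra|auto].
  - rewrite Rmult_assoc, <- Rpow_mult_distr. replace (2 * (1/2))%R with 1%R by field.
    rewrite pow1; ring.
Qed.

Lemma half_theta_spec p w : (Cnorm p < 1)%R -> Ccv (half_partial p w) (half_theta p w).
Proof.
  intro Hp. destruct (tcoef_decay p w Hp) as [A [HA HB]].
  destruct (geometric_Ccv (half_partial p w) A (1/2) HA ltac:(lra)) as [l Hl].
  { intro n. unfold half_partial. simpl sumC.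
    replace (sumC n (fun m => tcoef p m * w ^ m) + tcoef p n * w ^ n
             - sumC n (fun m => tcoef p m * w ^ m)) with (tcoef p n * w ^ n) by ring.
    apply HB. }
  unfold half_theta. rewrite (Clim_eq _ l Hl). auto.
Qed.

Lemma half_partial_succ p w n : half_partial p w (S n) = C1 - w * half_partial p (p * w) n.
Proof.
  unfold half_partial. rewrite sumC_shift, <- sumC_scal.
  unfold tcoef at 1. simpl (tri 0). simpl (m1 ^ 0). simpl (p ^ 0). simpl (w ^ 0).
  replace (C1 * C1 * C1) with C1 by ring. unfold Cminus.
  replace (- sumC n (fun k => w * (tcoef p k * (p * w) ^ k)))
    with (m1 * sumC n (fun k => w * (tcoef p k * (p * w) ^ k))) by ring.
  rewrite <- sumC_scal. f_equal. apply sumC_ext. intros k _.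
  rewrite tcoef_S, Cpow_mult. simpl. ring.
Qed.

Lemma half_theta_shift p w : (Cnorm p < 1)%R -> half_theta p w = C1 - w * half_theta p (p * w).
Proof.
  intro Hp. apply (Ccv_unique (fun n => half_partial p w (S n))).
  - apply Ccv_reindex with (c := 0%nat); [apply half_theta_spec; auto | intro; lia].
  - apply (Ccv_ext (fun n => C1 - w * half_partial p (p * w) n)).
    + exists O. intros. rewrite half_partial_succ; auto.
    + apply Ccv_minus; [apply Ccv_const|]. apply Ccv_scal, half_theta_spec; auto.
Qed.

Lemma tcoef_even p w k :
  tcoef p (k + k) * w ^ (k + k) = tcoef (p ^ 4) k * (- (p * w ^ 2)) ^ k.
Proof.
  unfold tcoef. replace (tri (k + k)) with (tri k + tri k + tri k + tri k + k)%nat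
    by (rewrite tri_add; pose proof (tri_double k); nia).
  replace (- (p * w ^ 2)) with (m1 * (p * (w * (w * C1)))) by (simpl; ring).
  change (p ^ 4) with (p * (p * (p * (p * C1)))).
  rewrite !Cpow_mult, !Cpow_add, !Cpow_one. ring.
Qed.

Lemma tcoef_odd p w k :
  tcoef p (S (k + k)) * w ^ (S (k + k)) = - w * (tcoef (p ^ 4) k * (- (p ^ 3 * w ^ 2)) ^ k).
Proof.
  rewrite tcoef_S. change (w ^ S (k + k)) with (w * w ^ (k + k)).
  transitivity (m1 * w * p ^ (k + k) * (tcoef p (k + k) * w ^ (k + k))); [ring|].
  rewrite tcoef_even. unfold tcoef.
  replace (- (p ^ 3 * w ^ 2)) with (m1 * (p * (p * (p * C1))) * (w * (w * C1))) by (simpl; ring).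
  replace (- (p * w ^ 2)) with (m1 * (p * C1) * (w * (w * C1))) by (simpl; ring).
  rewrite !Cpow_mult, !Cpow_add, !Cpow_one. ring.
Qed.

Lemma half_theta_dissect p w : (Cnorm p < 1)%R ->
  half_theta p w = half_theta (p ^ 4) (- (p * w ^ 2)) - w * half_theta (p ^ 4) (- (p ^ 3 * w ^ 2)).
Proof.
  intro Hp. assert (Hp4 : (Cnorm (p ^ 4)%C < 1)%R) by (apply Cnorm_pow_lt1; auto).
  apply (Ccv_unique (fun n => half_partial p w (n + n))).
  - apply Ccv_reindex with (c := 0%nat); [apply half_theta_spec; auto | intro; lia].
  - apply (Ccv_ext (fun n => half_partial (p ^ 4) (- (p * w ^ 2)) n
                           - w * half_partial (p ^ 4) (- (p ^ 3 * w ^ 2)) n)).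
    + exists O. intros n _. unfold half_partial.
      replace (n + n)%nat with (2 * n)%nat by lia. rewrite sumC_pairs.
      rewrite <- sumC_scal, <- sumC_minus. apply sumC_ext. intros k _.
      replace (2 * k)%nat with (k + k)%nat by lia. rewrite tcoef_even, tcoef_odd. ring.
    + apply Ccv_minus; [|apply Ccv_scal]; apply half_theta_spec; auto.
Qed.

(** ** Passing to the limit: the Jacobi triple product *)

Lemma tannery (f : nat -> nat -> CC) (g : nat -> CC) (l : CC) (A : R) (h : nat -> nat) :
  (0 <= A)%R -> (forall N m, (Cnorm (f N m) <= A * (1/2) ^ m)%R) ->
  (forall m, Ccv (fun N => f N m) (g m)) -> Ccv (fun n => sumC n g) l ->
  (forall N, (N <= h N)%nat) ->
  Ccv (fun N => sumC (h N) (f N)) l.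
Proof.
  intros HA Hf Hg Hl Hh e He.
  assert (Hgb : forall m, (Cnorm (g m) <= A * (1/2) ^ m)%R).
  { intro m. apply (Ccv_norm_le _ _ _ (Hg m)). intro; apply Hf. }
  destruct (pow_small (1/2) (e / (6 * (A + 1)))%R ltac:(lra)) as [K HK].
  { apply Rdiv_lt_0_compat; lra. }
  assert (HKe : (2 * A * (1/2) ^ K < e / 3)%R).
  { specialize (HK K (le_n _)). apply Rle_lt_trans with (2 * A * (e / (6 * (A + 1))))%R.
    - apply Rmult_le_compat_l; lra.
    - apply Rmult_lt_reg_r with (r := (6 * (A + 1))%R); [lra|].
      replace (2 * A * (e / (6 * (A + 1))) * (6 * (A + 1)))%R with (2 * A * e)%R by (field; lra).
      replace (e / 3 * (6 * (A + 1)))%R with (2 * A * e + 2 * e)%R by field. lra. }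
  assert (Hlimit_tail : (Cnorm (l - sumC K g)%C <= 2 * A * (1/2) ^ K)%R).
  { apply (Ccv_norm_le (fun n => sumC (K + n) g - sumC K g)).
    - apply Ccv_minus; [|apply Ccv_const].
      apply (Ccv_reindex (fun n => sumC n g) l (fun n => K + n)%nat 0); [auto | intro; lia].
    - intro n. rewrite sumC_add.
      replace (sumC K g + sumC n (fun k => g (K + k)%nat) - sumC K g)
        with (sumC n (fun k => g (K + k)%nat)) by ring.
      apply geometric_tail; auto. }
  destruct (Ccv_sumC K f g Hg (e / 3)%R ltac:(lra)) as [N1 HN1].
  exists (max N1 K). intros N HN. specialize (HN1 N ltac:(lia)).
  specialize (Hh N). replace (h N) with (K + (h N - K))%nat by lia. rewrite sumC_add.
  pose proof (geometric_tail (f N) A K (h N - K) HA (Hf N)).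
  replace (sumC K (f N) + sumC (h N - K) (fun k => f N (K + k)%nat) - l) with
    (sumC (h N - K) (fun k => f N (K + k)%nat) + ((sumC K (f N) - sumC K g) - (l - sumC K g)))
    by ring.
  eapply Rle_lt_trans; [apply Cnorm_triangle|].
  eapply Rle_lt_trans; [apply Rplus_le_compat_l, Cnorm_minus|]. lra.
Qed.

(* Gaussian binomials are bounded, by the closed form and the product bounds. *)
Lemma qbin_bounded p : (Cnorm p < 1)%R ->
  exists B, (0 <= B)%R /\ forall n j, (Cnorm (qbin p n j) <= B)%R.
Proof.
  intro Hp. set (c0 := exp (- (Cnorm p / ((1 - Cnorm p) * (1 - Cnorm p))))).
  set (U := exp (Cnorm p / (1 - Cnorm p))).
  assert (Hc0 : (0 < c0)%R) by apply exp_pos. assert (HU : (0 < U)%R) by apply exp_pos.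
  exists (U / (c0 * c0))%R. split; [apply Rlt_le, Rdiv_lt_0_compat; nra|].
  intros n j. destruct (Nat.le_gt_cases j n) as [Hjn|Hjn].
  - assert (H1 : (Cnorm (qbin p n j) * Cnorm (qfac p j) * Cnorm (qfac p (n - j)) <= U)%R).
    { rewrite <- !Cnorm_mult, qbin_closed by auto. apply part_upper; auto. }
    pose proof (part_lower p p j Hp Hp). pose proof (part_lower p p (n - j) Hp Hp).
    fold c0 in H, H0. pose proof (Cnorm_ge0 (qbin p n j)).
    apply Rmult_le_reg_r with (r := (c0 * c0)%R); [nra|].
    replace (U / (c0 * c0) * (c0 * c0))%R with U by (field; lra).
    eapply Rle_trans; [|apply H1]. rewrite Rmult_assoc.
    apply Rmult_le_compat_l; auto. apply Rmult_le_compat; lra.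
  - rewrite qbin_above, Cnorm_0 by auto. apply Rlt_le, Rdiv_lt_0_compat; nra.
Qed.

Lemma qbin_central_limit p (j : nat -> nat) c : (Cnorm p < 1)%R ->
  (forall N, (c <= N)%nat -> (j N <= N + N)%nat) ->
  (forall N, (N <= j N + c)%nat) -> (forall N, (N <= N + N - j N + c)%nat) ->
  Ccv (fun N => qbin p (N + N) (j N)) (Cinv (qpoch p p)).
Proof.
  intros Hp Hj Hlo Hhi. set (L := qpoch p p).
  assert (HL : L <> C0) by (apply qpoch_neq_0; auto).
  assert (HS : Ccv (qpoch_part p p) L) by (apply qpoch_spec; auto).
  apply (Ccv_ext (fun N => qfac p (N + N) * Cinv (qfac p (j N) * qfac p (N + N - j N)))).
  { exists c. intros N HN. rewrite <- (qbin_closed p (N + N) (j N)) by auto.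
    field. split; apply part_neq_0; auto. }
  replace (Cinv L) with (L * Cinv (L * L)) by (field; auto).
  apply Ccv_mult; [apply Ccv_reindex with (c := 0%nat); [auto | intro; lia]|].
  apply Ccv_inv; [|apply Cmult_neq_0; auto].
  apply Ccv_mult; apply Ccv_reindex with (c := c); auto.
Qed.

(* The theta series S(p,z) = Σ_{m ∈ ℤ} (-1)^m p^{m(m-1)/2} z^m, split at m = 0. *)
Definition theta_series (p z : CC) : CC := half_theta p z + half_theta p (p / z) - C1.

Lemma triple_product_upper p z : (Cnorm p < 1)%R ->
  Ccv (fun N => sumC (S N) (fun m => qbin p (N + N) (N + m) * tcoef p m * z ^ m))
      (Cinv (qpoch p p) * half_theta p z).
Proof.
  intro Hp. destruct (qbin_bounded p Hp) as [B [HB0 HB]].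
  destruct (tcoef_decay p z Hp) as [A [HA HAb]].
  apply (tannery _ (fun m => Cinv (qpoch p p) * (tcoef p m * z ^ m)) _ (B * A) S).
  - apply Rmult_le_pos; auto.
  - intros N m.
    replace (qbin p (N + N) (N + m) * tcoef p m * z ^ m)
      with (qbin p (N + N) (N + m) * (tcoef p m * z ^ m)) by ring.
    rewrite Cnorm_mult, Rmult_assoc. apply Rmult_le_compat; auto using Cnorm_ge0.
  - intro m. apply (Ccv_ext (fun N => qbin p (N + N) (N + m) * (tcoef p m * z ^ m))).
    + exists O; intros; ring.
    + apply Ccv_mult; [|apply Ccv_const].
      apply qbin_central_limit with (c := m); auto; intros; lia.
  - apply (Ccv_ext (fun n => Cinv (qpoch p p) * half_partial p z n)).
    + exists O; intros; unfold half_partial; rewrite sumC_scal; auto.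
    + apply Ccv_scal, half_theta_spec; auto.
  - intro; lia.
Qed.

Lemma triple_product_lower p z : (Cnorm p < 1)%R ->
  Ccv (fun N => sumC N (fun m => qbin p (N + N) (N - S m) * tcoef p (S m) * (p / z) ^ (S m)))
      (Cinv (qpoch p p) * (half_theta p (p / z) - C1)).
Proof.
  intro Hp. destruct (qbin_bounded p Hp) as [B [HB0 HB]].
  destruct (tcoef_decay p (p / z) Hp) as [A [HA HAb]].
  apply (tannery _ (fun m => Cinv (qpoch p p) * (tcoef p (S m) * (p / z) ^ (S m))) _
           (B * A)%R (fun N => N)).
  - apply Rmult_le_pos; auto.
  - intros N m.
    replace (qbin p (N + N) (N - S m) * tcoef p (S m) * (p / z) ^ (S m))
      with (qbin p (N + N) (N - S m) * (tcoef p (S m) * (p / z) ^ (S m))) by ring.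
    rewrite Cnorm_mult, Rmult_assoc. apply Rmult_le_compat; auto using Cnorm_ge0.
    eapply Rle_trans; [apply HAb|]. rewrite <- tech_pow_Rmult.
    pose proof (pow_le (1/2) m ltac:(lra)). nra.
  - intro m. apply (Ccv_ext (fun N => qbin p (N + N) (N - S m) * (tcoef p (S m) * (p / z) ^ (S m)))).
    + exists O; intros; ring.
    + apply Ccv_mult; [|apply Ccv_const].
      apply qbin_central_limit with (c := S m); auto; intros; lia.
  - apply (Ccv_ext (fun n => Cinv (qpoch p p) * (half_partial p (p / z) (S n) - C1))).
    + exists O; intros n _. unfold half_partial.
      rewrite sumC_shift, sumC_scal. unfold tcoef at 1. simpl. ring.
    + apply Ccv_scal, Ccv_minus; [|apply Ccv_const].
      apply Ccv_reindex with (c := 0%nat); [apply half_theta_spec; auto | intro; lia].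
  - intro; lia.
Qed.

Theorem triple_product p z : p <> C0 -> (Cnorm p < 1)%R -> z <> C0 ->
  qpoch p p * theta z p = theta_series p z.
Proof.
  intros Hp0 Hp Hz. assert (HL : qpoch p p <> C0) by (apply qpoch_neq_0; auto).
  assert (Hfin : Ccv (fun N => qpoch_part z p N * qpoch_part (p / z) p N)
    (Cinv (qpoch p p) * half_theta p z + Cinv (qpoch p p) * (half_theta p (p / z) - C1))).
  { apply (Ccv_ext _ _ _ (ex_intro _ O (fun N _ => eq_sym (finite_triple_product p z N Hp0 Hz)))).
    apply Ccv_plus; [apply triple_product_upper | apply triple_product_lower]; auto. }
  pose proof (Ccv_mult _ _ _ _ (qpoch_spec z p Hp) (qpoch_spec (p / z) p Hp)) as Hinf.
  unfold theta. rewrite <- (Ccv_unique _ _ _ Hfin Hinf). unfold theta_series. field. auto.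
Qed.

(** ** Dissection of theta functions and the theorem *)

Lemma theta_series_dissect p z : p <> C0 -> (Cnorm p < 1)%R -> z <> C0 ->
  theta_series p z = theta_series (p ^ 4) (- (p * z ^ 2)) - z * theta_series (p ^ 4) (- (p ^ 3 * z ^ 2)).
Proof.
  intros Hp0 Hp Hz. assert (Hp4 : (Cnorm (p ^ 4)%C < 1)%R) by (apply Cnorm_pow_lt1; auto).
  unfold theta_series. rewrite (half_theta_dissect p z Hp), (half_theta_dissect p (p / z) Hp).
  replace (p ^ 4 / - (p * z ^ 2)) with (- (p * (p / z) ^ 2)) by (simpl; field; nonzero).
  rewrite (half_theta_shift (p ^ 4) (p ^ 4 / - (p ^ 3 * z ^ 2)) Hp4).
  replace (p ^ 4 * (p ^ 4 / - (p ^ 3 * z ^ 2))) with (- (p ^ 3 * (p / z) ^ 2))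
    by (simpl; field; nonzero).
  simpl. field. nonzero.
Qed.

Lemma theta_as_series w p : p <> C0 -> (Cnorm p < 1)%R -> w <> C0 ->
  theta w p = theta_series p w * Cinv (qpoch p p).
Proof.
  intros Hp Hp1 Hw. rewrite <- (triple_product p w Hp Hp1 Hw). field.
  apply qpoch_neq_0; auto.
Qed.

Lemma theta_at_0 z : theta z C0 = C1 - z.
Proof. unfold theta. rewrite !qpoch_at_0. unfold Cdiv. ring. Qed.

(* With h = r², the even and odd parts of S(h, r x), both series in h⁴ = q². *)
Definition even_part (r w : CC) : CC := theta_series ((r ^ 2) ^ 4) (- (r ^ 2 * w ^ 2)).
Definition odd_part (r w : CC) : CC := theta_series ((r ^ 2) ^ 4) (- ((r ^ 2) ^ 3 * w ^ 2)).

Lemma theta_dissection r x : r <> C0 -> (Cnorm r < 1)%R -> x <> C0 ->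
  let L1 := qpoch (r ^ 2) (r ^ 2) in
  let L4 := qpoch ((r ^ 2) ^ 4) ((r ^ 2) ^ 4) in
  let E := even_part r (r * x) in
  let O := odd_part r (r * x) in
  theta (- ((r ^ 2) ^ 4 * x ^ 2)) ((r ^ 2) ^ 4) = O * Cinv L4 /\
  theta (- (r ^ 4 * x ^ 2)) ((r ^ 2) ^ 4) = E * Cinv L4 /\
  theta (- (r * x)) (r ^ 2) = (E + (r * x) * O) * Cinv L1 /\
  theta (r * x) (r ^ 2) = (E - (r * x) * O) * Cinv L1.
Proof.
  intros Hr Hr1 Hx L1 L4 E O.
  assert (Hp : (Cnorm (r ^ 2)%C < 1)%R) by (apply Cnorm_pow_lt1; auto).
  assert (Hp4 : (Cnorm ((r ^ 2) ^ 4)%C < 1)%R) by (apply Cnorm_pow_lt1; auto).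
  split; [|split; [|split]].
  - replace (- ((r ^ 2) ^ 4 * x ^ 2)) with (- ((r ^ 2) ^ 3 * (r * x) ^ 2)) by (simpl; ring).
    apply theta_as_series; nonzero.
  - replace (- (r ^ 4 * x ^ 2)) with (- (r ^ 2 * (r * x) ^ 2)) by (simpl; ring).
    apply theta_as_series; nonzero.
  - rewrite theta_as_series, theta_series_dissect by nonzero.
    replace ((- (r * x)) ^ 2) with ((r * x) ^ 2) by (simpl; ring).
    unfold E, O, L1, even_part, odd_part. ring.
  - rewrite theta_as_series, theta_series_dissect by nonzero.
    unfold E, O, L1, even_part, odd_part. ring.
Qed.

Close Scope C_scope.

(* r plays the role of the fixed fourth root q^{1/4}; q^{1/2} = r^2. *)
Theorem mainTheorem7 (q r x y u v : CC) :
  Cpow r 4 = q ->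
  Cnorm q < 1 ->
  x <> RtoC 0 -> y <> RtoC 0 -> u <> RtoC 0 -> v <> RtoC 0 ->
  let q2 := (q ^ 2)%C in
  let h := (r ^ 2)%C in
  (RtoC 4 * q * x * y * u * v *
     theta4 (- (q2 * x ^ 2)) (- (q2 * y ^ 2)) (- (q2 * u ^ 2)) (- (q2 * v ^ 2)) q2
   + RtoC 4 * h * x * y *
     theta4 (- (q2 * x ^ 2)) (- (q2 * y ^ 2)) (- (q * u ^ 2)) (- (q * v ^ 2)) q2
   + RtoC 4 * h * u * v *
     theta4 (- (q * x ^ 2)) (- (q * y ^ 2)) (- (q2 * u ^ 2)) (- (q2 * v ^ 2)) q2
   + RtoC 4 *
     theta4 (- (q * x ^ 2)) (- (q * y ^ 2)) (- (q * u ^ 2)) (- (q * v ^ 2)) q2)%C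
  =
  ((qpoch h h ^ 4) / (qpoch q2 q2 ^ 4) *
   ( theta4 (- (r * x)) (- (r * y)) (- (r * u)) (- (r * v)) h
   + theta4 (r * x) (r * y) (- (r * u)) (- (r * v)) h
   + theta4 (- (r * x)) (- (r * y)) (r * u) (r * v) h
   + theta4 (r * x) (r * y) (r * u) (r * v) h))%C.
Proof.
  intros Hq Hq1 Hx Hy Hu Hv q2 h. subst q2 h q. unfold theta4.
  replace (RtoC 4) with (C1 + C1 + C1 + C1)%C by (unfold RtoC, Cplus; simpl; f_equal; ring).
  replace ((r ^ 4) ^ 2)%C with ((r ^ 2) ^ 4)%C by (simpl; ring).
  destruct (classic (r = C0)) as [->|Hr0].
  { (* q = 0: every theta value reduces to its first factor 1 - z. *)
    replace ((C0 ^ 2) ^ 4)%C with C0 by (simpl; ring). replace (C0 ^ 2)%C with C0 by (simpl; ring).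
    rewrite !theta_at_0, !qpoch_at_0. simpl. field. apply C1_neq_0. }
  assert (Hr1 : Cnorm r < 1).
  { apply Rnot_le_lt. intro H. rewrite Cnorm_pow in Hq1.
    pose proof (pow_R1_Rle (Cnorm r) 4 H). lra. }
  assert (HL1 : qpoch (r ^ 2)%C (r ^ 2)%C <> C0)
    by (apply qpoch_neq_0; apply Cnorm_pow_lt1; auto).
  assert (HL4 : qpoch ((r ^ 2) ^ 4)%C ((r ^ 2) ^ 4)%C <> C0)
    by (apply qpoch_neq_0; repeat apply Cnorm_pow_lt1; auto).
  destruct (theta_dissection r x Hr0 Hr1 Hx) as [-> [-> [-> ->]]].
  destruct (theta_dissection r y Hr0 Hr1 Hy) as [-> [-> [-> ->]]].
  destruct (theta_dissection r u Hr0 Hr1 Hu) as [-> [-> [-> ->]]].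
  destruct (theta_dissection r v Hr0 Hr1 Hv) as [-> [-> [-> ->]]].
  (* What remains is a polynomial identity in the even and odd parts. *)
  simpl. field. auto.
Qed.
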